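(* For integers $k>n\ge0$ and real $u\ge k$, $$I_{k,n}(u):=\int_k^u P_{k-n-1}(x-n-1)\,\frac{F_n(x)\,dx}{x-n}=\sum_{j=0}^{n}(-1)^{n-j}\,P_{k-j}(u-j)\,F_j(u).$$
   Context: The functions $P_k$ are defined by $P_0(u)=1$ for $u\ge 0$, and for integers $k\ge1$, $P_k:[k,\infty)\to\mathbb{R}$ is the function with $P_k(k)=0$ and $uP_k'(u)=P_{k-1}(u-1)$ for $u\ge k$. The auxiliary functions $F_k$ are defined by $F_0(u)=1$ for $u\ge0$, and for integers $k\ge1$, $F_k:[k,\infty)\to\mathbb{R}$ is the function with $F_k(k)=0$ and $(u-k+1)F_k'(u)=F_{k-1}(u)$ for $u\ge k$, i.e. $F_k(u)=\int_k^u F_{k-1}(x)\,\frac{dx}{x-k+1}$ (so $F_1(u)=\log u$). *)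

From Stdlib Require Import Reals Lra Lia.
From Coquelicot Require Import Coquelicot.
Open Scope R_scope.

(* P_0(u) = 1; for k >= 1, P_k(u) = int_k^u P_{k-1}(t-1) dt / t,
   i.e. the solution of u P_k'(u) = P_{k-1}(u-1) with P_k(k) = 0.
   (Values outside the domain [k, oo) are irrelevant.) *)
Fixpoint P (k : nat) : R -> R :=
  match k with
  | O => fun _ => 1
  | S k' => fun u => RInt (fun t => P k' (t - 1) / t) (INR (S k')) u
  end.

Fixpoint F (k : nat) : R -> R :=
  match k with
  | O => fun _ => 1
  | S k' => fun u => RInt (fun x => F k' x / (x - INR k')) (INR (S k')) u
  end.

From Stdlib Require Import Reals Lra Lia.
From Coquelicot Require Import Coquelicot.
Open Scope R_scope.

(* By the fundamental theorem of calculus, P_k is continuous on (k-1, oo) and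
   differentiable on (k, oo) with u P_k'(u) = P_{k-1}(u-1); likewise
   (u-k+1) F_k'(u) = F_{k-1}(u).  Write J_{k,m} for the integrand of I_{k,m}.
   For n+1 < k the boundary term G(x) = P_{k-n-1}(x-n-1) F_{n+1}(x) satisfies
   G' = J_{k,n+1} + J_{k,n} (product rule) and G(k) = P_{k-n-1}(k-n-1) F_{n+1}(k) = 0,
   hence I_{k,n+1}(u) + I_{k,n}(u) = G(u).  Since I_{k,0}(u) = P_k(u) by definition,
   this recursion unrolls into the alternating sum. *)

Lemma continuous_shift (f : R -> R) (a x : R) :
  continuous f (x - a) -> continuous (fun t => f (t - a)) x.
Proof.
  intros Hf. apply (continuous_comp (fun t => t - a) f); [|exact Hf].
  apply (continuous_minus (fun t => t) (fun _ => a)).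
  - apply continuous_id.
  - apply continuous_const.
Qed.

Lemma continuous_inv_shift (a x : R) : x <> a -> continuous (fun t => / (t - a)) x.
Proof. intros Hx. apply (continuous_shift Rinv). apply continuous_Rinv. lra. Qed.

Lemma is_derive_RInt_halfline (g : R -> R) (c a x : R) :
  c < a -> c < x -> (forall t, c < t -> continuous g t) ->
  is_derive (fun u => RInt g a u) x (g x).
Proof.
  intros Ha Hx Hg. apply is_derive_RInt with a; [|apply Hg; lra].
  assert (Hpos : 0 < x - c) by lra. exists (mkposreal _ Hpos). intros y Hy.
  apply RInt_correct, ex_RInt_continuous. intros z Hz. apply Hg.
  apply Rabs_lt_between' in Hy. simpl in Hy.
  assert (c < Rmin a y) by (apply Rmin_glb_lt; lra). lra.
Qed.

Lemma P_derive_of_continuous (k : nat) :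
  (forall x, INR k - 1 < x -> continuous (P k) x) ->
  forall x, INR k < x -> is_derive (P (S k)) x (P k (x - 1) / x).
Proof.
  intros Hc x Hx. pose proof (pos_INR k).
  apply (is_derive_RInt_halfline (fun t => P k (t - 1) / t) (INR k)); [rewrite S_INR; lra | lra |].
  intros t Ht. apply (continuous_mult (fun t => P k (t - 1)) Rinv).
  - apply continuous_shift, Hc. lra.
  - apply continuous_Rinv. lra.
Qed.

Lemma P_continuous (k : nat) : forall x, INR k - 1 < x -> continuous (P k) x.
Proof.
  induction k as [|k IH]; intros x Hx.
  - apply continuous_const.
  - rewrite S_INR in Hx. apply (ex_derive_continuous (P (S k)) x).
    eexists. apply P_derive_of_continuous; [exact IH | lra].
Qed.

Lemma P_derive (k : nat) (x : R) : INR k < x -> is_derive (P (S k)) x (P k (x - 1) / x).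
Proof. apply P_derive_of_continuous, P_continuous. Qed.

Lemma F_derive_of_continuous (k : nat) :
  (forall x, INR k - 1 < x -> continuous (F k) x) ->
  forall x, INR k < x -> is_derive (F (S k)) x (F k x / (x - INR k)).
Proof.
  intros Hc x Hx.
  apply (is_derive_RInt_halfline (fun t => F k t / (t - INR k)) (INR k)); [rewrite S_INR; lra | lra |].
  intros t Ht. apply (continuous_mult (F k) (fun t => / (t - INR k))).
  - apply Hc. lra.
  - apply continuous_inv_shift. lra.
Qed.

Lemma F_continuous (k : nat) : forall x, INR k - 1 < x -> continuous (F k) x.
Proof.
  induction k as [|k IH]; intros x Hx.
  - apply continuous_const.
  - rewrite S_INR in Hx. apply (ex_derive_continuous (F (S k)) x).
    eexists. apply F_derive_of_continuous; [exact IH | lra].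
Qed.

Lemma F_derive (k : nat) (x : R) : INR k < x -> is_derive (F (S k)) x (F k x / (x - INR k)).
Proof. apply F_derive_of_continuous, F_continuous. Qed.

Definition integrand (k m : nat) (x : R) : R :=
  P (k - m - 1) (x - INR m - 1) * F m x / (x - INR m).

Lemma INR_sub_succ (k m : nat) : (m < k)%nat -> INR (k - m - 1) = INR k - INR m - 1.
Proof.
  intros Hm. replace k with (k - m - 1 + m + 1)%nat at 2 by lia.
  rewrite !plus_INR. simpl. ring.
Qed.

Lemma integrand_continuous (k m : nat) (x : R) :
  (m < k)%nat -> INR k - 1 < x -> continuous (integrand k m) x.
Proof.
  intros Hm Hx. unfold integrand.
  pose proof (INR_sub_succ k m Hm). pose proof (pos_INR (k - m - 1)).
  apply (continuous_mult (fun x => P (k - m - 1) (x - INR m - 1) * F m x)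
                         (fun x => / (x - INR m))).
  - apply (continuous_mult (fun x => P (k - m - 1) (x - INR m - 1)) (F m)).
    + apply (continuous_shift (fun y => P (k - m - 1) (y - 1))), continuous_shift.
      apply P_continuous. lra.
    + apply F_continuous. lra.
  - apply continuous_inv_shift. lra.
Qed.

Lemma integrand_ex_RInt (k m : nat) (u : R) :
  (m < k)%nat -> INR k <= u -> ex_RInt (integrand k m) (INR k) u.
Proof.
  intros Hm Hu. apply (ex_RInt_continuous (V := R_CompleteNormedModule)). intros z Hz.
  rewrite Rmin_left in Hz by lra. apply integrand_continuous; [exact Hm | lra].
Qed.

Lemma boundary_derive (k n : nat) (x : R) : (S n < k)%nat -> INR k - 1 < x ->
  is_derive (fun t => P (k - S n) (t - INR (S n)) * F (S n) t) x
            (integrand k (S n) x + integrand k n x).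
Proof.
  intros Hn Hx.
  destruct (k - S n)%nat as [|b] eqn:Eb; [lia|].
  assert (Ek : INR k = INR b + INR n + 2).
  { replace k with (b + n + 2)%nat by lia. rewrite !plus_INR. simpl. ring. }
  pose proof (pos_INR b). rewrite S_INR in *.
  assert (DP : is_derive (fun t => P (S b) (t - (INR n + 1))) x
                 (1 * (P b (x - (INR n + 1) - 1) / (x - (INR n + 1))))).
  { apply (is_derive_comp (P (S b)) (fun t => t - (INR n + 1))).
    - apply P_derive. lra.
    - auto_derive; auto; ring. }
  pose proof (is_derive_mult _ _ x _ _ DP (F_derive n x ltac:(lra)) Rmult_comm) as D.
  replace (integrand k (S n) x + integrand k n x) with
    (1 * (P b (x - (INR n + 1) - 1) / (x - (INR n + 1))) * F (S n) x
     + P (S b) (x - (INR n + 1)) * (F n x / (x - INR n))).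
  - exact D.
  - unfold integrand. rewrite S_INR.
    replace (k - S n - 1)%nat with b by lia. replace (k - n - 1)%nat with (S b) by lia.
    replace (x - INR n - 1) with (x - (INR n + 1)) by ring.
    field. split; lra.
Qed.

(* The recursion I_{k,n+1}(u) + I_{k,n}(u) = P_{k-n-1}(u-n-1) F_{n+1}(u); the boundary
   term vanishes at x = k because P_{k-n-1}(k-n-1) = 0. *)
Lemma integral_recursion (k n : nat) (u : R) : (S n < k)%nat -> INR k <= u ->
  RInt (integrand k (S n)) (INR k) u + RInt (integrand k n) (INR k) u
  = P (k - S n) (u - INR (S n)) * F (S n) u.
Proof.
  intros Hn Hu.
  set (G := fun t => P (k - S n) (t - INR (S n)) * F (S n) t).
  assert (HG0 : G (INR k) = 0).
  { unfold G. destruct (k - S n)%nat as [|b] eqn:Eb; [lia|].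
    replace (INR k - INR (S n)) with (INR (S b)).
    - cbn [P]. rewrite RInt_point. apply Rmult_0_l.
    - rewrite <- minus_INR by lia. now rewrite Eb. }
  change (P (k - S n) (u - INR (S n)) * F (S n) u) with (G u).
  rewrite <- (Rminus_0_r (G u)), <- HG0.
  rewrite <- (RInt_plus (integrand k (S n)) (integrand k n))
    by (apply integrand_ex_RInt; [lia | exact Hu]).
  apply is_RInt_unique, (is_RInt_derive G).
  - intros x Hx. rewrite Rmin_left in Hx by lra. apply boundary_derive; [exact Hn | lra].
  - intros x Hx. rewrite Rmin_left in Hx by lra.
    apply (continuous_plus (integrand k (S n)) (integrand k n));
      apply integrand_continuous; lia || lra.
Qed.

Lemma integral_base (k : nat) (u : R) : (0 < k)%nat ->
  RInt (integrand k 0) (INR k) u = P k u.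
Proof.
  intros Hk. destruct k as [|k]; [lia|]. cbn [P].
  apply RInt_ext. intros x _. unfold integrand. cbn [F INR].
  replace (S k - 0 - 1)%nat with k by lia. rewrite !Rminus_0_r, Rmult_1_r. reflexivity.
Qed.

Lemma alternating_sum_succ (a b : nat -> R) (n : nat) :
  sum_f_R0 (fun j => (-1) ^ (S n - j) * a j * b j) (S n)
  = a (S n) * b (S n) - sum_f_R0 (fun j => (-1) ^ (n - j) * a j * b j) n.
Proof.
  cbn [sum_f_R0]. rewrite Nat.sub_diag.
  assert (E : sum_f_R0 (fun j => (-1) ^ (S n - j) * a j * b j) n
              = - sum_f_R0 (fun j => (-1) ^ (n - j) * a j * b j) n).
  { replace (- sum_f_R0 (fun j => (-1) ^ (n - j) * a j * b j) n)
      with (-1 * sum_f_R0 (fun j => (-1) ^ (n - j) * a j * b j) n) by ring.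
    rewrite scal_sum. apply sum_eq. intros j Hj.
    replace (S n - j)%nat with (S (n - j)) by lia. simpl. ring. }
  rewrite E. simpl. ring.
Qed.

Theorem theorem6 (k n : nat) (u : R) (Hnk : (n < k)%nat) (Hu : INR k <= u) :
  RInt (fun x => P (k - n - 1) (x - INR n - 1) * F n x / (x - INR n)) (INR k) u
  = sum_f_R0 (fun j => (-1) ^ (n - j) * P (k - j) (u - INR j) * F j u) n.
Proof.
  change (fun x => P (k - n - 1) (x - INR n - 1) * F n x / (x - INR n)) with (integrand k n).
  induction n as [|n IH].
  - rewrite integral_base by lia. simpl. rewrite Nat.sub_0_r, Rminus_0_r. ring.
  - rewrite (alternating_sum_succ (fun j => P (k - j) (u - INR j)) (fun j => F j u)).
    rewrite <- IH by lia. cbv beta.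
    pose proof (integral_recursion k n u Hnk Hu). lra.
Qed.
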